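(* Let $p$ be a prime and $\theta\in\mathbb{F}_p((X^{-1}))$. Then $$\inf_{r\geq 0,\ Q\in\mathbb{F}_p[X]\setminus\{0\}} |Q|\cdot\|X^rQ\theta\|>0$$ (i.e. $\theta$ is a counterexample to the $X$-adic Littlewood conjecture over $\mathbb{F}_p$) if and only if there is a constant $D\in\mathbb{N}_0$ such that for every $r\geq0$ the partial quotients $A^{(r)}_j$ of the simple continued fraction expansion $[A^{(r)}_1,A^{(r)}_2,\dots]$ of $\langle X^r\theta\rangle$ satisfy $\deg(A^{(r)}_j)\leq D+1$ for all $j\geq1$. Moreover, if such a $D$ exists (we then say $\theta$ has finite deficiency $D(\theta)=D$), then $$\inf_{r\geq 0,\ Q\in\mathbb{F}_p[X]\setminus\{0\}} |Q|\cdot\|X^rQ\theta\|\geq 2^{-(D+1)}.$$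
   Context: $\mathbb{F}_p((X^{-1}))$ is the field of formal Laurent series $\theta=\sum_{i=j}^\infty a_iX^{-i}$ over $\mathbb{F}_p$ ($a_j\ne0$), with $\deg(\theta)=-j$, $|\theta|=2^{-j}$ ($|0|=0$), fractional part $\langle\theta\rangle=\sum_{i\ge\max\{1,j\}}a_iX^{-i}$, and $\|\theta\|=|\langle\theta\rangle|$. For a Laurent series $\eta$ with $\langle\eta\rangle=\eta$, its simple continued fraction expansion $\eta=[A_1,A_2,\dots]$ (i.e. $[0;A_1,A_2,\dots]$) has polynomial partial quotients $A_i\in\mathbb{F}_p[X]$ of degree $\ge1$; convergents $P_h/Q_h=[0;A_1,\dots,A_h]$ have $\deg Q_h=\sum_{i=1}^h\deg A_i$. *)

From HB Require Import structures.
From mathcomp Require Import all_boot all_order all_algebra.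
From mathcomp Require Import boolp reals.
Set Implicit Arguments. Unset Strict Implicit. Unset Printing Implicit Defensive.
Import Order.TTheory GRing.Theory Num.Theory.
Local Open Scope ring_scope.

(* Formal Laurent series in X^{-1} over a ring F:
   theta = sum_{e <= N} lcoef theta e * X^e, where lcoef e is the
   coefficient of X^e and the support is bounded above by lbnd. *)
Record laurent (F : nzRingType) := Laurent {
  lcoef : int -> F ;
  lbnd : int ;
  lbndP : forall e : int, lbnd < e -> lcoef e = 0 }.

Section Laurent.
Variable F : nzRingType.

Definition leqser (x y : laurent F) : Prop := forall e, lcoef x e = lcoef y e.

Definition lzero (x : laurent F) : Prop := forall e, lcoef x e = 0.

Definition pcoef (P : {poly F}) (e : int) : F :=
  match e with Posz n => P`_n | Negz _ => 0 end.

Lemma pcoefP (P : {poly F}) e : (size P)%:Z < e -> pcoef P e = 0.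
Proof.
case: e => [n|n] //= H; apply: nth_default.
by rewrite ltz_nat in H; exact: ltnW.
Qed.

Definition lpoly (P : {poly F}) : laurent F := Laurent (@pcoefP P).

Definition lone : laurent F := lpoly 1.

Lemma laddP (x y : laurent F) e :
  Num.max (lbnd x) (lbnd y) < e -> lcoef x e + lcoef y e = 0.
Proof.
rewrite gt_max => /andP[hx hy].
by rewrite (lbndP hx) (lbndP hy) addr0.
Qed.

Definition ladd (x y : laurent F) : laurent F := Laurent (@laddP x y).

(* product: coefficient of X^e is the (finite) sum of x_a y_b over a + b = e *)
Definition mulcoef (x y : laurent F) (e : int) : F :=
  \sum_(k < (absz (lbnd x + lbnd y - e)%R).+1)
     lcoef x (lbnd x - k%:Z) * lcoef y (e - lbnd x + k%:Z).

Lemma lmulP (x y : laurent F) e : lbnd x + lbnd y < e -> mulcoef x y e = 0.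
Proof.
move=> H; rewrite /mulcoef big1 // => k _.
rewrite (@lbndP _ y) ?mulr0 //.
have h0 : (0 : int) <= k%:Z by [].
have : lbnd y < e - lbnd x by rewrite ltrBrDr addrC.
move=> h; apply: (lt_le_trans h); by rewrite lerDl.
Qed.

Definition lmul (x y : laurent F) : laurent F := Laurent (@lmulP x y).

Definition fraccoef (x : laurent F) (e : int) : F := if e < 0 then lcoef x e else 0.

Lemma lfracP (x : laurent F) e : lbnd x < e -> fraccoef x e = 0.
Proof. by move=> H; rewrite /fraccoef (lbndP H); case: ifP. Qed.

Definition lfrac (x : laurent F) : laurent F := Laurent (@lfracP x).

Definition is_deg (x : laurent F) (d : int) : Prop :=
  lcoef x d <> 0 /\ forall e, d < e -> lcoef x e = 0.

Definition labs (R : realType) (x : laurent F) : R :=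
  match pselect (exists d, is_deg x d) with
  | left H => (2%:R : R) ^ (projT1 (cid H))
  | right _ => 0
  end.

Definition lnorm (R : realType) (x : laurent F) : R := labs R (lfrac x).

Definition is_irrational_ser (x : laurent F) : Prop :=
  ~ exists (P Q : {poly F}), Q != 0 /\ leqser (lmul (lpoly Q) x) (lpoly P).

(* A (indexed from 1: A 1, A 2, ...) is the (infinite) sequence of partial
   quotients of the simple continued fraction eta = [A_1, A_2, ...]:
   eta_0 = eta, and for every j, eta_j <> 0, eta_{j+1} = <eta_{j+1}> and
   1 / eta_j = A_{j+1} + eta_{j+1}, i.e. A_{j+1} is the polynomial part and
   eta_{j+1} the fractional part of 1/eta_j. *)
Definition cf_expansion (eta : laurent F) (A : nat -> {poly F}) : Prop :=
  exists es : nat -> laurent F,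
    leqser (es 0%N) eta /\
    forall j : nat,
      ~ lzero (es j) /\
      leqser (lfrac (es j.+1)) (es j.+1) /\
      leqser (lmul (es j) (ladd (lpoly (A j.+1)) (es j.+1))) lone.

Definition deficiency_le (x : laurent F) (D : nat) : Prop :=
  forall (r : nat) (A : nat -> {poly F}),
    cf_expansion (lfrac (lmul (lpoly 'X^r) x)) A ->
    forall j : nat, (0 < j)%N -> ((size (A j)).-1 <= D.+1)%N.

End Laurent.
Arguments labs {F} R x.
Arguments lnorm {F} R x.

From HB Require Import structures.
From mathcomp Require Import all_boot all_order all_algebra.
From mathcomp Require Import boolp reals.
Import Order.TTheory GRing.Theory Num.Theory.
Local Open Scope ring_scope.
From mathcomp Require Import zify ring.
Set Implicit Arguments.
Unset Strict Implicit.
Unset Printing Implicit Defensive.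

(* Work in the field [lseries F] of Laurent series in X^-1 (the quotient of [laurent F]
   by [leqser]), where |x| = 2^(deg x) is multiplicative and ultrametric.  Expand
   eta = <X^r theta> = [A_1, A_2, ...] with remainders eta_k, so that
   eta_k (A_(k+1) + eta_(k+1)) = 1 and deg eta_k = - deg A_(k+1).  As <X^r Q theta> =
   <Q eta>, the product |Q| ||X^r Q theta|| is 2^(deg Q + deg <Q eta>).  The denominators
   Q of the convergents satisfy deg Q + deg <Q eta> = - deg A_(j+1), so a positive lower
   bound on the products bounds every deg A_j.  Conversely, if all deg A_j <= D + 1, write
   Q eta_k = P + eps with P a polynomial: either P = 0, or deg P < deg Q and
   <P eta_(k+1)> = - <eps (A_(k+1) + eta_(k+1))>, so induction on deg Q gives
   deg Q + deg <Q eta_k> >= - (D + 1).  Irrationality of theta makes the expansion of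
   <X^r theta> infinite, so that it exists. *)

Section SumWindow.
Variable V : nmodType.
Implicit Types f : int -> V.

Lemma sum_window_pad f (h : int) (n : nat) :
  (forall a, f a != 0 -> h - n%:Z <= a <= h) ->
  forall d m : nat,
  \sum_(k < (n + d + m).+1) f (h + d%:Z - k%:Z) = \sum_(k < n.+1) f (h - k%:Z).
Proof.
move=> supp; elim=> [|d IHd] m.
  elim: m => [|m IHm]; first by rewrite !addn0; apply: eq_bigr => k _; rewrite addr0.
  rewrite addnS big_ord_recr /= IHm.
  have -> : f (h + 0%:Z - (n + 0 + m).+1%:Z) = 0.
    by apply/eqP; apply: contraT => /supp /andP[lo _]; lia.
  by rewrite addr0.
rewrite addnS addSn big_ord_recl /=.
have -> : f (h + d.+1%:Z - 0%:Z) = 0.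
  by apply/eqP; apply: contraT => /supp /andP[_ hi]; lia.
by rewrite add0r -(IHd m); apply: eq_bigr => k _; congr f; rewrite /bump /=; lia.
Qed.

Lemma sum_window_widen f (h : int) (n : nat) (H : int) (N : nat) :
  (forall a, f a != 0 -> h - n%:Z <= a <= h) -> h <= H -> H - N%:Z <= h - n%:Z ->
  \sum_(k < N.+1) f (H - k%:Z) = \sum_(k < n.+1) f (h - k%:Z).
Proof.
move=> supp le_hH le_lo.
have [d eq_H] : exists d : nat, H = h + d%:Z by exists (absz (H - h)%R); lia.
have [m ->] : exists m : nat, N = (n + d + m)%N.
  by exists (absz (N%:Z - n%:Z - d%:Z)%R); lia.
by rewrite eq_H; exact: sum_window_pad.
Qed.

Lemma sum_window f (h : int) (n : nat) (h' : int) (n' : nat) :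
  (forall a, f a != 0 -> (h - n%:Z <= a <= h) && (h' - n'%:Z <= a <= h')) ->
  \sum_(k < n.+1) f (h - k%:Z) = \sum_(k < n'.+1) f (h' - k%:Z).
Proof.
move=> supp; pose H := Num.max h h'.
pose N := absz (H - Num.min (h - n%:Z) (h' - n'%:Z))%R.
rewrite -(@sum_window_widen f h n H N); first last.
- by rewrite /N /H; lia.
- by rewrite le_max lexx.
- by move=> a /supp /andP[].
rewrite (@sum_window_widen f h' n' H N) //.
- by move=> a /supp /andP[].
- by rewrite le_max lexx orbT.
- by rewrite /N /H; lia.
Qed.

End SumWindow.

(** * Products of Laurent series *)

Section LaurentRing.
Variable R : nzRingType.
Implicit Types (x y z : laurent R) (P Q : {poly R}).

Definition vanish_above x (B : int) := forall e, B < e -> lcoef x e = 0.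

Lemma lbnd_vanish x : vanish_above x (lbnd x).
Proof. exact: lbndP. Qed.
Arguments lbnd_vanish : clear implicits.

Lemma vanish_above_le x B B' : vanish_above x B -> B <= B' -> vanish_above x B'.
Proof. by move=> vx le_BB' e lt_B'e; apply: vx; exact: le_lt_trans lt_B'e. Qed.

Lemma lcoef_neq0_le x B a : vanish_above x B -> lcoef x a != 0 -> a <= B.
Proof. by move=> vx; apply: contraR; rewrite -ltNge => /vx ->. Qed.

Lemma lcoef_lmul_window x y e (h : int) (n : nat) :
  (forall a, lcoef x a * lcoef y (e - a) != 0 -> h - n%:Z <= a <= h) ->
  lcoef (lmul x y) e = \sum_(k < n.+1) lcoef x (h - k%:Z) * lcoef y (e - (h - k%:Z)).
Proof.
move=> supp; pose f a := lcoef x a * lcoef y (e - a).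
transitivity (\sum_(k < (absz (lbnd x + lbnd y - e)%R).+1) f (lbnd x - k%:Z)).
  by apply: eq_bigr => k _; rewrite /f; congr (_ * lcoef y _); lia.
apply: sum_window => a; rewrite /f => nz; rewrite supp // andbT.
have /(lcoef_neq0_le (lbnd_vanish x)) : lcoef x a != 0.
  by apply: contra nz => /eqP ->; rewrite mul0r.
have /(lcoef_neq0_le (lbnd_vanish y)) : lcoef y (e - a) != 0.
  by apply: contra nz => /eqP ->; rewrite mulr0.
lia.
Qed.

Lemma lcoef_lmul x y Bx By (i : nat) : vanish_above x Bx -> vanish_above y By ->
  lcoef (lmul x y) (Bx + By - i%:Z) =
  \sum_(j < i.+1) lcoef x (Bx - j%:Z) * lcoef y (By + j%:Z - i%:Z).
Proof.
move=> vx vy; rewrite (@lcoef_lmul_window _ _ _ Bx i) => [|a nz].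
  by apply: eq_bigr => j _; congr (_ * lcoef y _); lia.
have /(lcoef_neq0_le vx) : lcoef x a != 0 by apply: contra nz => /eqP ->; rewrite mul0r.
have /(lcoef_neq0_le vy) : lcoef y (Bx + By - i%:Z - a) != 0.
  by apply: contra nz => /eqP ->; rewrite mulr0.
lia.
Qed.

Lemma lmul_vanish x y Bx By :
  vanish_above x Bx -> vanish_above y By -> vanish_above (lmul x y) (Bx + By).
Proof.
move=> vx vy e lt_e; rewrite /= /mulcoef big1 // => k _.
have [->|nz] := eqVneq (lcoef x (lbnd x - k%:Z)) 0; first by rewrite mul0r.
have le_x := lcoef_neq0_le vx nz; rewrite vy ?mulr0 //; lia.
Qed.

(* The coefficients of X^B, ..., X^(B-N+1) in x, as a polynomial in X^-1.  Heads of
   products are truncated products of heads ([lhead_lmul]), which transfers the ring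
   laws from polynomials to Laurent series. *)
Definition lhead (B : int) x (N : nat) : {poly R} := \poly_(j < N) lcoef x (B - j%:Z).

Lemma coef_lhead B x N j :
  (lhead B x N)`_j = if (j < N)%N then lcoef x (B - j%:Z) else 0.
Proof. exact: coef_poly. Qed.

Lemma lhead_leqser B x y N : leqser x y -> lhead B x N = lhead B y N.
Proof. by move=> xy; apply/polyP => j; rewrite !coef_lhead xy. Qed.

Lemma leqser_lhead x y B : vanish_above x B -> vanish_above y B ->
  (forall N, lhead B x N = lhead B y N) -> leqser x y.
Proof.
move=> vx vy eq_head e; have [lt_Be|le_eB] := ltP B e; first by rewrite vx ?vy.
have := congr1 (fun p : {poly R} => p`_(absz (B - e)%R)) (eq_head (absz (B - e)%R).+1).
by rewrite /= !coef_lhead ltnSn; have -> : B - (absz (B - e)%R)%:Z = e by lia.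
Qed.

Lemma take_poly_mull N P Q : take_poly N (take_poly N P * Q) = take_poly N (P * Q).
Proof.
apply/polyP => i; rewrite !coef_take_poly; case: ifP => // lt_iN.
rewrite !coefM; apply: eq_bigr => j _; rewrite coef_take_poly.
by rewrite (leq_ltn_trans _ lt_iN) // -ltnS.
Qed.

Lemma take_poly_mulr N P Q : take_poly N (P * take_poly N Q) = take_poly N (P * Q).
Proof.
apply/polyP => i; rewrite !coef_take_poly; case: ifP => // lt_iN.
rewrite !coefM; apply: eq_bigr => j _; rewrite coef_take_poly.
by rewrite (leq_ltn_trans _ lt_iN) // leq_subr.
Qed.

Lemma take_lhead B x N : take_poly N (lhead B x N) = lhead B x N.
Proof. by rewrite take_poly_id // size_poly. Qed.

Lemma lhead_lmul x y Bx By N : vanish_above x Bx -> vanish_above y By ->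
  lhead (Bx + By) (lmul x y) N = take_poly N (lhead Bx x N * lhead By y N).
Proof.
move=> vx vy; apply/polyP => i; rewrite coef_lhead coef_take_poly.
case: ifP => // lt_iN; rewrite (lcoef_lmul _ vx vy) coefM.
apply: eq_bigr => j _; rewrite !coef_lhead (leq_ltn_trans _ lt_iN) ?leq_ord //.
rewrite (leq_ltn_trans _ lt_iN) ?leq_subr //; congr (_ * lcoef y _).
by have := ltn_ord j; lia.
Qed.

Lemma lhead_ladd B x y N : lhead B (ladd x y) N = lhead B x N + lhead B y N.
Proof. by apply/polyP => j; rewrite coefD !coef_lhead; case: ifP; rewrite ?addr0. Qed.

Lemma ladd_vanish x y B :
  vanish_above x B -> vanish_above y B -> vanish_above (ladd x y) B.
Proof. by move=> vx vy e lt_Be /=; rewrite vx ?vy ?addr0. Qed.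

Lemma lmul_leqser x x' y y' :
  leqser x x' -> leqser y y' -> leqser (lmul x y) (lmul x' y').
Proof.
move=> xx' yy'.
have vx' : vanish_above x' (lbnd x) by move=> e /lbndP; rewrite xx'.
have vy' : vanish_above y' (lbnd y) by move=> e /lbndP; rewrite yy'.
apply: (@leqser_lhead _ _ (lbnd x + lbnd y)).
- exact: lmul_vanish (lbnd_vanish _) (lbnd_vanish _).
- exact: lmul_vanish.
move=> N; rewrite (lhead_lmul N (lbnd_vanish x) (lbnd_vanish y)) (lhead_lmul N vx' vy').
by rewrite (lhead_leqser _ _ xx') (lhead_leqser _ _ yy').
Qed.

Lemma lmulA x y z : leqser (lmul (lmul x y) z) (lmul x (lmul y z)).
Proof.
have vx := lbnd_vanish x; have vy := lbnd_vanish y; have vz := lbnd_vanish z.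
have vxy := lmul_vanish vx vy; have vyz := lmul_vanish vy vz.
apply: (@leqser_lhead _ _ (lbnd x + lbnd y + lbnd z)).
- exact: lmul_vanish.
- by rewrite -addrA; exact: lmul_vanish.
move=> N; rewrite (lhead_lmul N vxy vz) (lhead_lmul N vx vy) -addrA.
by rewrite (lhead_lmul N vx vyz) (lhead_lmul N vy vz) take_poly_mull take_poly_mulr mulrA.
Qed.

Lemma lmulDr x y z : leqser (lmul x (ladd y z)) (ladd (lmul x y) (lmul x z)).
Proof.
pose M := Num.max (lbnd y) (lbnd z); have vx := lbnd_vanish x.
have vy : vanish_above y M by apply: vanish_above_le (lbnd_vanish _) _; rewrite le_max lexx.
have vz : vanish_above z M.
  by apply: vanish_above_le (lbnd_vanish _) _; rewrite le_max lexx orbT.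
apply: (@leqser_lhead _ _ (lbnd x + M)).
- exact/lmul_vanish/ladd_vanish.
- by apply: ladd_vanish; apply: lmul_vanish.
move=> N; rewrite lhead_ladd (lhead_lmul N vx (ladd_vanish vy vz)).
by rewrite (lhead_lmul N vx vy) (lhead_lmul N vx vz) lhead_ladd mulrDr take_polyD.
Qed.

Lemma lone_vanish : vanish_above (lone R) 0.
Proof. by case=> [[|n]|n] //= _; rewrite coefC. Qed.

Lemma lmul1 x : leqser (lmul (lone R) x) x.
Proof.
have vx := lbnd_vanish x; have v1x := lmul_vanish lone_vanish vx.
rewrite add0r in v1x; apply: (leqser_lhead v1x vx) => N.
rewrite -[in LHS](add0r (lbnd x)) (lhead_lmul N lone_vanish vx).
have -> : lhead 0 (lone R) N = take_poly N 1.
  apply/polyP => j; rewrite coef_lhead coef_take_poly; case: ifP => // _.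
  by case: j => [|j] /=; rewrite coefC.
by rewrite take_poly_mull mul1r take_lhead.
Qed.

Lemma loppP x e : lbnd x < e -> - lcoef x e = 0.
Proof. by move=> /lbndP ->; rewrite oppr0. Qed.

Definition lopp x : laurent R := Laurent (@loppP x).

Lemma pcoef_lt0 P e : e < 0 -> pcoef P e = 0.
Proof. by case: e. Qed.

Lemma pcoef_neq0 P a : pcoef P a != 0 -> (0 <= a) && (a < (size P)%:Z).
Proof.
case: a => [k|k] nz //=; last by rewrite eqxx in nz.
by rewrite ltz_nat; apply: contraNT nz; rewrite -leqNgt => le_Pk /=; rewrite nth_default.
Qed.

Lemma lpolyM P Q : leqser (lpoly (P * Q)) (lmul (lpoly P) (lpoly Q)).
Proof.
move=> e; pose f a := pcoef P a * pcoef Q (e - a).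
have suppf a : f a != 0 -> (0 <= a) && (0 <= e - a) && (a < (size P)%:Z).
  rewrite /f => nz.
  have /pcoef_neq0/andP[a0 aP] : pcoef P a != 0 by apply: contra nz => /eqP ->; rewrite mul0r.
  have /pcoef_neq0/andP[ea0 _] : pcoef Q (e - a) != 0.
    by apply: contra nz => /eqP ->; rewrite mulr0.
  by rewrite a0 ea0 aP.
rewrite (@lcoef_lmul_window _ _ _ e (absz e)); last by move=> a /suppf; lia.
have -> : lcoef (lpoly (P * Q)) e = \sum_(k < (absz e).+1) pcoef P (e - k%:Z) * pcoef Q k%:Z.
  case: e {f suppf} => [n|n] /=; last first.
    by rewrite big1 // => k _; rewrite pcoef_lt0 ?mul0r //; lia.
  rewrite coefMr; apply: eq_bigr => k _ /=.
  by have -> : n%:Z - k%:Z = (n - k)%N by have := ltn_ord k; lia.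
by apply: eq_bigr => k _; congr (_ * pcoef Q _); lia.
Qed.

End LaurentRing.
Arguments lbnd_vanish {R} x.

Lemma lmulC (R : comNzRingType) (x y : laurent R) : leqser (lmul x y) (lmul y x).
Proof.
have vx := lbnd_vanish x; have vy := lbnd_vanish y.
apply: (@leqser_lhead _ _ _ (lbnd x + lbnd y)).
- exact: lmul_vanish.
- by rewrite addrC; exact: lmul_vanish.
by move=> N; rewrite (lhead_lmul N vx vy) addrC (lhead_lmul N vy vx) mulrC.
Qed.

(** * The ring of Laurent series *)

(* [laurent R] up to [leqser]: the support bound is only asserted, so that equality is
   coefficientwise ([lseries_eq]). *)
Record lseries (R : nzRingType) := LSeries {
  lscoef : int -> R;
  lscoef_bounded : exists B : int, forall e, B < e -> lscoef e = 0 }.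
Arguments lscoef {R}.
Arguments LSeries {R lscoef}.

Section LSeriesZmod.
Variable R : nzRingType.
Implicit Types (x y : laurent R) (a b c : lseries R) (P Q : {poly R}).

Lemma lseries_eq a b : lscoef a =1 lscoef b -> a = b.
Proof.
case: a b => f f_bnd [g g_bnd] /= /funext eq_fg; subst g.
by congr LSeries; exact: Prop_irrelevance.
Qed.

Definition lclass x : lseries R := LSeries (ex_intro _ (lbnd x) (@lbndP _ x)).

Definition lrepr a : laurent R :=
  let B := cid (lscoef_bounded a) in Laurent (proj2_sig B).

Lemma lclassP x y : lclass x = lclass y <-> leqser x y.
Proof.
split=> [/(congr1 lscoef) xy e | xy]; last exact: lseries_eq.
exact: (congr1 (fun f => f e) xy).
Qed.

Lemma lreprK a : lclass (lrepr a) = a.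
Proof. exact: lseries_eq. Qed.

Lemma lclassK x : leqser x (lrepr (lclass x)).
Proof. by []. Qed.

Definition lszero : lseries R := LSeries (ex_intro _ 0 (fun _ _ => erefl (0 : R))).
Definition lsadd a b := lclass (ladd (lrepr a) (lrepr b)).
Definition lsopp a := lclass (lopp (lrepr a)).

Lemma lsaddA : associative lsadd.
Proof. by move=> a b c; apply: lseries_eq => e /=; rewrite addrA. Qed.
Lemma lsaddC : commutative lsadd.
Proof. by move=> a b; apply: lseries_eq => e /=; rewrite addrC. Qed.
Lemma lsadd0 : left_id lszero lsadd.
Proof. by move=> a; apply: lseries_eq => e /=; rewrite add0r. Qed.
Lemma lsaddN : left_inverse lszero lsopp lsadd.
Proof. by move=> a; apply: lseries_eq => e /=; rewrite addNr. Qed.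

HB.instance Definition _ := gen_eqMixin (lseries R).
HB.instance Definition _ := gen_choiceMixin (lseries R).
HB.instance Definition _ := GRing.isZmodule.Build (lseries R) lsaddA lsaddC lsadd0 lsaddN.

Lemma lclassD x y : lclass (ladd x y) = lclass x + lclass y.
Proof. exact: lseries_eq. Qed.

Lemma lclass_eq0 x : lclass x = 0 <-> lzero x.
Proof.
split=> [/(congr1 lscoef) x0 e | x0]; last exact: lseries_eq.
exact: (congr1 (fun f => f e) x0).
Qed.

Definition lsfrac a := lclass (lfrac (lrepr a)).

Lemma lsfracB : zmod_morphism lsfrac.
Proof.
by move=> a b; apply: lseries_eq => e /=; rewrite /fraccoef /=; case: ifP; rewrite ?subr0.
Qed.

HB.instance Definition _ := GRing.isZmodMorphism.Build _ _ lsfrac lsfracB.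

Lemma lclass_lfrac x : lclass (lfrac x) = lsfrac (lclass x).
Proof. exact: lseries_eq. Qed.

Definition ipart a : {poly R} := \poly_(n < (absz (lbnd (lrepr a))).+1) lscoef a n.

Definition lspoly P := lclass (lpoly P).

Lemma ipart_add_frac a : lspoly (ipart a) + lsfrac a = a.
Proof.
apply: lseries_eq => -[n|n] /=; rewrite /fraccoef /=; last by rewrite add0r.
rewrite addr0 coef_poly; case: ifP => // /negbT; rewrite -leqNgt => lt_n.
by symmetry; apply: (@lbndP _ (lrepr a)); lia.
Qed.

Lemma lsfrac_poly P : lsfrac (lspoly P) = 0.
Proof. by apply: lseries_eq => -[n|n] /=; rewrite /fraccoef /=. Qed.

Lemma lsfrac_id a : lsfrac (lsfrac a) = lsfrac a.
Proof.
apply: lseries_eq => e /=; rewrite /fraccoef /=.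
by case: ifP => // e_lt0; rewrite /fraccoef e_lt0.
Qed.

End LSeriesZmod.

Section LSeriesRing.
Variable R : comNzRingType.
Implicit Types (x y : laurent R) (a b c : lseries R) (P Q : {poly R}).

Definition lsmul a b := lclass (lmul (lrepr a) (lrepr b)).

Lemma lclass_lmul x y : lclass (lmul x y) = lsmul (lclass x) (lclass y).
Proof. by apply/lclassP; apply: lmul_leqser. Qed.

Lemma lsmulA : associative lsmul.
Proof.
move=> a b c; rewrite -[a]lreprK -[b]lreprK -[c]lreprK -!lclass_lmul.
by apply/esym/lclassP; exact: lmulA.
Qed.

Lemma lsmulC : commutative lsmul.
Proof. by move=> a b; apply/lclassP; exact: lmulC. Qed.

Lemma lsmul1 : left_id (lclass (lone R)) lsmul.
Proof. by move=> a; rewrite -[a]lreprK -lclass_lmul; apply/lclassP; exact: lmul1. Qed.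

Lemma lsmulDl : left_distributive lsmul +%R.
Proof.
move=> a b c; rewrite !(lsmulC _ c) -[a]lreprK -[b]lreprK -[c]lreprK.
by rewrite -lclassD -!lclass_lmul -lclassD; apply/lclassP; exact: lmulDr.
Qed.

Lemma lsone_neq0 : lclass (lone R) != 0.
Proof.
by apply/eqP => /lclass_eq0 /(_ 0); rewrite /= coef1 /=; apply/eqP; exact: oner_neq0.
Qed.

HB.instance Definition _ :=
  GRing.Zmodule_isComNzRing.Build (lseries R) lsmulA lsmulC lsmul1 lsmulDl lsone_neq0.

Lemma lclassM x y : lclass (lmul x y) = lclass x * lclass y.
Proof. exact: lclass_lmul. Qed.

Lemma lspolyB : zmod_morphism (@lspoly R).
Proof. by move=> P Q; apply: lseries_eq => -[n|n] /=; rewrite ?coefB ?subr0. Qed.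

Lemma lspoly_monoid : monoid_morphism (@lspoly R).
Proof. by split=> // P Q; rewrite -lclassM; apply/lclassP; exact: lpolyM. Qed.

HB.instance Definition _ := GRing.isZmodMorphism.Build _ _ (@lspoly R) lspolyB.
HB.instance Definition _ := GRing.isMonoidMorphism.Build _ _ (@lspoly R) lspoly_monoid.

End LSeriesRing.

(** * Degree *)

Section Degree.
Variable F : fieldType.
Implicit Types (x y : laurent F) (a b : lseries F) (P Q : {poly F}).

Lemma is_deg_uniq x d d' : is_deg x d -> is_deg x d' -> d = d'.
Proof.
move=> [xd0 vd] [xd'0 vd']; case: (ltgtP d d') => // [/vd | /vd'] //.
Qed.

Lemma is_deg_leqser x y d : leqser x y -> is_deg x d -> is_deg y d.
Proof. by move=> xy [xd0 vd]; split=> [|e /vd]; rewrite -xy. Qed.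

Lemma is_deg_exists x : ~ lzero x -> exists d, is_deg x d.
Proof.
move=> x_neq0; have [e xe0] : exists e, lcoef x e != 0.
  apply: contrapT => no_e; apply: x_neq0 => e.
  by apply/eqP; apply: contraT => xe0; case: no_e; exists e.
have top : exists n, lcoef x (lbnd x - n%:Z) != 0.
  exists (absz (lbnd x - e)%R).
  have le_e := lcoef_neq0_le (lbnd_vanish x) xe0.
  by have -> : lbnd x - (absz (lbnd x - e)%R)%:Z = e by lia.
case: (ex_minnP top) => m xm0 m_min; exists (lbnd x - m%:Z); split; first exact/eqP.
move=> e' lt_e'; have [/lbndP //|le_e'] := ltP (lbnd x) e'.
apply/eqP; apply: contraT => xe'0; have := m_min (absz (lbnd x - e')%R).
have -> : lbnd x - (absz (lbnd x - e')%R)%:Z = e' by lia.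
by move/(_ xe'0); lia.
Qed.

Lemma is_deg_lmul x y d d' : is_deg x d -> is_deg y d' -> is_deg (lmul x y) (d + d').
Proof.
move=> [xd0 vx] [yd0 vy]; split; last exact: lmul_vanish.
have := congr1 (fun p : {poly F} => p`_0) (lhead_lmul 1 vx vy).
rewrite /= coef_lhead coef_take_poly /= coef0M !coef_lhead /= !subr0 => ->.
by apply/eqP; rewrite mulf_neq0 //; apply/eqP.
Qed.

Lemma is_deg_ladd x y d : is_deg x d -> vanish_above y (d - 1) -> is_deg (ladd x y) d.
Proof.
move=> [xd0 vx] vy; split=> [|e lt_de] /=; first by rewrite vy ?addr0 //; lia.
by rewrite vx ?vy ?addr0 //; lia.
Qed.

Lemma is_deg_lpoly P : P != 0 -> is_deg (lpoly P) (size P).-1%:Z.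
Proof.
move=> P0; split; last move=> e lt_e.
  by rewrite /= -lead_coefE; apply/eqP; rewrite lead_coef_eq0.
apply/eqP; apply: contraT => /pcoef_neq0 /andP[_ lt_eP].
have : (0 < size P)%N by rewrite size_poly_gt0.
(* [pcoef_neq0] elaborates [size P] along another coercion path: [set] merges the two
   copies, which [lia] would otherwise treat as distinct atoms. *)
by move: lt_e lt_eP; rewrite -subn1; set s := size P; lia.
Qed.

(* Junk value [ldeg 0 = 0]. *)
Definition ldeg a : int :=
  if pselect (exists d, is_deg (lrepr a) d) is left ex_d then sval (cid ex_d) else 0.

Lemma ldegP a : a != 0 -> is_deg (lrepr a) (ldeg a).
Proof.
move=> a0; rewrite /ldeg; case: pselect => [ex_d|[]]; first by case: cid.
by apply: is_deg_exists => /lclass_eq0; rewrite lreprK; apply/eqP.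
Qed.

Lemma ldeg_lclass x d : is_deg x d -> ldeg (lclass x) = d.
Proof.
move=> xd; have a0 : lclass x != 0.
  by apply/eqP => /lclass_eq0 x0; case: xd => /eqP; rewrite x0 eqxx.
exact: is_deg_uniq (ldegP a0) (is_deg_leqser (lclassK x) xd).
Qed.

Lemma is_deg_ldeg x : lclass x != 0 -> is_deg x (ldeg (lclass x)).
Proof. by move=> /ldegP; apply: is_deg_leqser. Qed.

Lemma ldegM a b : a != 0 -> b != 0 -> ldeg (a * b) = ldeg a + ldeg b.
Proof. by move=> a0 b0; apply: ldeg_lclass; apply: is_deg_lmul; apply: ldegP. Qed.

Lemma lspoly_eq0 P : (lspoly P == 0) = (P == 0).
Proof.
apply/eqP/eqP => [/lclass_eq0 P0 | ->]; last exact: raddf0.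
by apply/polyP => n; rewrite coef0; exact: (P0 n).
Qed.

Lemma ldeg_poly P : P != 0 -> ldeg (lspoly P) = (size P).-1%:Z.
Proof. by move=> P0; apply/ldeg_lclass/is_deg_lpoly. Qed.

Lemma ldeg1 : ldeg 1 = 0.
Proof. by rewrite -(rmorph1 (@lspoly F)) ldeg_poly ?oner_neq0 // size_poly1. Qed.

Lemma ldegDl a b : a != 0 -> (b != 0 -> ldeg b < ldeg a) -> ldeg (a + b) = ldeg a.
Proof.
move=> a0 lt_ba; have [->|b0] := eqVneq b 0; first by rewrite addr0.
apply: ldeg_lclass; apply: is_deg_ladd (ldegP a0) _.
by apply: vanish_above_le (proj2 (ldegP b0)) _; have := lt_ba b0; lia.
Qed.

Lemma ldegN a : ldeg (- a) = ldeg a.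
Proof.
have [->|a0] := eqVneq a 0; first by rewrite oppr0.
have [a_d0 va] := ldegP a0; apply: ldeg_lclass; split=> [|e /va] /=.
  by apply/eqP; rewrite oppr_eq0; apply/eqP.
by move->; rewrite oppr0.
Qed.

Lemma lsfrac_ldeg_lt0 a : ldeg a < 0 -> lsfrac a = a.
Proof.
have [->|a0] := eqVneq a 0; first by rewrite raddf0.
move=> a_lt0; have [_ va] := ldegP a0; apply: lseries_eq => e /=.
rewrite /fraccoef; case: ifP => // /negbT; rewrite -leNgt => e_ge0.
by symmetry; apply: va; lia.
Qed.

Lemma ldeg_lsfrac_lt0 a : lsfrac a != 0 -> ldeg (lsfrac a) < 0.
Proof.
move=> /ldegP [fa_d0 _]; rewrite ltNge; apply/negP => d_ge0; apply: fa_d0.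
by rewrite /= /fraccoef ltNge d_ge0.
Qed.

Lemma labs_lclass (K : realType) x : lclass x != 0 -> labs K x = 2%:R ^ ldeg (lclass x).
Proof.
move=> /is_deg_ldeg xd; rewrite /labs.
case: pselect => [ex_d | []]; last by exists (ldeg (lclass x)).
by case: cid => d xd' /=; rewrite (is_deg_uniq xd' xd).
Qed.

End Degree.

(** * Inverses *)

Section Inverse.
Variable F : fieldType.
Implicit Types (x : laurent F) (a b : lseries F) (p q r : {poly F}).

Lemma take_poly_take m n p : (m <= n)%N -> take_poly m (take_poly n p) = take_poly m p.
Proof.
move=> le_mn; apply/polyP => i; rewrite !coef_take_poly; case: ifP => // lt_im.
by rewrite (leq_trans lt_im le_mn).
Qed.

Lemma lhead_take B x m n : (m <= n)%N -> take_poly m (lhead B x n) = lhead B x m.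
Proof.
move=> le_mn; apply/polyP => i; rewrite coef_take_poly !coef_lhead; case: ifP => // lt_im.
by rewrite (leq_trans lt_im le_mn).
Qed.

(* Writing p = c (1 - u) with X | u, the inverse of p modulo X^N is
   c^-1 (1 + u + ... + u^(N-1)). *)
Lemma take_poly_inv p N : p`_0 != 0 -> exists q, take_poly N (p * q) = take_poly N 1.
Proof.
move=> p00; set c := p`_0; set u := 1 - c^-1 *: p.
have u0 : take_poly 1 u = 0.
  apply/polyP => -[|i]; rewrite coef_take_poly coef0 //=.
  by rewrite coefB coefZ coef1 mulVf // subrr.
have uX : u = drop_poly 1 u * 'X by rewrite -[LHS](poly_take_drop 1 u) u0 add0r expr1.
exists (c^-1 *: \sum_(i < N) u ^+ i).
have -> : p = c *: (1 - u) by rewrite /u opprB addrCA subrr addr0 scalerA divff // scale1r.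
rewrite -scalerAr -scalerAl scalerA mulVf // scale1r.
rewrite -opprB mulNr -subrX1 opprB take_polyD linearN /= uX exprMn take_polyMXn_0.
by rewrite oppr0 addr0.
Qed.

Lemma take_poly_mul_eq0 p r N : p`_0 != 0 -> take_poly N (p * r) = 0 -> take_poly N r = 0.
Proof.
move=> p00; elim: N => [|N IHN] prN; first exact: take_poly0l.
have {}IHN : take_poly N r = 0.
  by apply: IHN; rewrite -(take_poly_take _ (leqnSn N)) prN take_poly0r.
have r_lt j : (j < N)%N -> r`_j = 0.
  move=> lt_jN; have := congr1 (fun s : {poly F} => s`_j) IHN.
  by rewrite /= coef_take_poly lt_jN coef0.
have rN : r`_N = 0.
  have := congr1 (fun s : {poly F} => s`_N) prN; rewrite /= coef_take_poly ltnSn coef0 coefMr.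
  rewrite big_ord_recr /= big1 ?add0r ?subnn => [|j _]; last by rewrite r_lt ?mulr0.
  by move/eqP; rewrite mulf_eq0 (negbTE p00) => /eqP.
apply/polyP => j; rewrite coef_take_poly coef0; case: ifP => // lt_jN.
by case: (ltngtP j N) lt_jN => [/r_lt // | lt_Nj | -> //]; rewrite ltnS leqNgt lt_Nj.
Qed.

(* With d the degree of x, the truncated inverses of the heads of x from X^d
   are coherent, and together give the coefficients of 1/x from X^-d down. *)
Lemma lmul_inv_exists x : ~ lzero x -> exists y, leqser (lmul x y) (lone F).
Proof.
move=> /is_deg_exists [d [xd0 vx]].
have hd0 N : (lhead d x N.+1)`_0 != 0 by rewrite coef_lhead /= subr0; apply/eqP.
pose q N := sval (cid (take_poly_inv N.+1 (hd0 N))).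
have qP N : take_poly N.+1 (lhead d x N.+1 * q N) = take_poly N.+1 1.
  by rewrite /q; case: cid.
have q_coh M j : (j <= M)%N -> (q j)`_j = (q M)`_j.
  rewrite -ltnS => lt_jM; have := @take_poly_mul_eq0 _ (q j - q M) j.+1 (hd0 j).
  rewrite mulrBr linearB /= qP -(lhead_take d x lt_jM) take_poly_mull.
  rewrite -(take_poly_take (lhead d x M.+1 * q M) lt_jM) qP take_poly_take // subrr.
  move=> /(_ erefl) /(congr1 (fun s : {poly F} => s`_j)) /=.
  by rewrite coef_take_poly ltnSn coefB coef0 => /eqP; rewrite subr_eq0 => /eqP.
pose yc e := if e <= - d then (q (absz (- d - e)%R))`_(absz (- d - e)%R) else 0.
have ycP e : - d < e -> yc e = 0 by rewrite /yc ltNge => /negbTE ->.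
pose y := Laurent ycP.
have y_head M : lhead (- d) y M.+1 = take_poly M.+1 (q M).
  apply/polyP => j; rewrite coef_lhead coef_take_poly; case: ifP => // lt_jM.
  rewrite /= /yc ifT; last by lia.
  have -> : absz (- d - (- d - j%:Z))%R = j by lia.
  exact: q_coh.
exists y; apply: (@leqser_lhead _ _ _ 0).
- by have := lmul_vanish vx (lbnd_vanish y); rewrite addrN.
- exact: lone_vanish.
case=> [|M]; first by apply/polyP => i; rewrite !coef_lhead.
rewrite -[X in lhead X _ _ = _](addrN d) (lhead_lmul M.+1 vx (lbnd_vanish y)) y_head.
rewrite take_poly_mulr qP; apply/polyP => j; rewrite coef_lhead coef_take_poly.
by case: ifP => // _; case: j => [|j] /=; rewrite coefC.
Qed.

Definition lsinv a : lseries F :=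
  if pselect (exists b, b * a = 1) is left ex_b then sval (cid ex_b) else 0.

Lemma lsmulVf a : a != 0 -> lsinv a * a = 1.
Proof.
move=> a0; rewrite /lsinv; case: pselect => [ex_b | []]; first by case: cid.
have [|y ay] := @lmul_inv_exists (lrepr a).
  by move=> /lclass_eq0; rewrite lreprK; apply/eqP.
exists (lclass y); rewrite mulrC -[a]lreprK -lclassM.
by apply/lclassP => e; rewrite ay.
Qed.

Lemma lsinv0 : lsinv 0 = 0.
Proof.
rewrite /lsinv; case: pselect => // ex_b; exfalso.
by case: ex_b => b /eqP; rewrite mulr0 eq_sym oner_eq0.
Qed.

HB.instance Definition _ := GRing.ComNzRing_isField.Build (lseries F) lsmulVf lsinv0.

End Inverse.

(** * Continued fractions *)

Section ContinuedFraction.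
Variable F : fieldType.
Implicit Types (a b eta : lseries F) (P Q : {poly F}).

Lemma ldeg_ipart a : ipart a != 0 -> ldeg a = (size (ipart a : {poly F})).-1%:Z.
Proof.
move=> P0; rewrite -{1}(ipart_add_frac a) ldegDl ?ldeg_poly ?lspoly_eq0 //.
by move=> /ldeg_lsfrac_lt0 /lt_le_trans ->.
Qed.

Lemma lsfrac_polyM_frac Q a : lsfrac (lspoly Q * lsfrac a) = lsfrac (lspoly Q * a).
Proof.
by rewrite -{2}(ipart_add_frac a) mulrDr -rmorphM raddfD /= lsfrac_poly add0r.
Qed.

Lemma ipart0 : ipart (0 : lseries F) = 0.
Proof.
apply/eqP; rewrite -lspoly_eq0 -[X in X == _]addr0 -{2}(raddf0 (@lsfrac F)).
by rewrite ipart_add_frac.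
Qed.

Lemma size_ipart_polyM_frac Q a :
  Q != 0 -> (size (ipart (lspoly Q * lsfrac a)%R : {poly F}) < size Q)%N.
Proof.
move=> Q0; set z := (lspoly Q * lsfrac a)%R; have [->|P0] := eqVneq (ipart z) 0.
  by rewrite size_poly0 size_poly_gt0.
have z0 : z != 0 by apply: contraNneq P0 => ->; exact/eqP/ipart0.
have fa0 : lsfrac a != 0 by apply: contraNneq z0 => fa0; rewrite /z fa0 mulr0.
have := ldeg_ipart P0; rewrite ldegM ?lspoly_eq0 // ldeg_poly // => deg_P.
have := ldeg_lsfrac_lt0 fa0.
have : (0 < size (ipart z : {poly F}))%N by rewrite size_poly_gt0.
have : (0 < size Q)%N by rewrite size_poly_gt0.
(* [set] merges coercion paths, as in [is_deg_lpoly]. *)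
by move: deg_P; set d := ldeg (lsfrac a); set p := size (ipart z : {poly F}); lia.
Qed.

Definition lcf_expansion eta (e : nat -> lseries F) (A : nat -> {poly F}) :=
  e 0%N = eta /\
  forall j, [/\ e j != 0, lsfrac (e j.+1) = e j.+1 & e j * (lspoly (A j.+1) + e j.+1) = 1].

Section Expansion.
Variables (eta : lseries F) (e : nat -> lseries F) (A : nat -> {poly F}).
Hypotheses (eta_frac : lsfrac eta = eta) (e_cf : lcf_expansion eta e A).

Let e_neq0 j : e j != 0. Proof. by have [_ /(_ j) []] := e_cf. Qed.

Let e_frac j : lsfrac (e j) = e j.
Proof. by case: j => [|j]; [rewrite e_cf.1 | have [_ /(_ j) []] := e_cf]. Qed.

Let e_rec j : e j * (lspoly (A j.+1) + e j.+1) = 1.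
Proof. by have [_ /(_ j) []] := e_cf. Qed.

Let e_quot_neq0 j : lspoly (A j.+1) + e j.+1 != 0.
Proof. by apply/eqP => w0; have /eqP := e_rec j; rewrite w0 mulr0 eq_sym oner_eq0. Qed.

Let ldeg_e_lt0 j : ldeg (e j) < 0.
Proof. by rewrite -e_frac ldeg_lsfrac_lt0 // e_frac e_neq0. Qed.

Lemma ldeg_cf_rem k : [/\ A k.+1 != 0, (0 < (size (A k.+1)).-1)%N
  & ldeg (e k) = - ((size (A k.+1)).-1)%:Z].
Proof.
have ek := ldeg_e_lt0 k; have ek1 := ldeg_e_lt0 k.+1.
have := congr1 (@ldeg F) (e_rec k); rewrite ldeg1 ldegM //.
have [A0|A0] := eqVneq (A k.+1) 0; first by rewrite A0 raddf0 add0r; lia.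
rewrite ldegDl ?ldeg_poly ?lspoly_eq0 // => [deg_sum|_]; last by lia.
by split=> //; lia.
Qed.

Lemma cf_frac_lower_bound (M : nat) : (forall j, (0 < j)%N -> ((size (A j)).-1 <= M)%N) ->
  forall Q k, Q != 0 -> lsfrac (lspoly Q * e k) != 0 /\
    - (M%:Z) <= ((size Q).-1)%:Z + ldeg (lsfrac (lspoly Q * e k)).
Proof.
move=> A_le Q k; move: {2}(size Q) (leqnn (size Q)) => n.
elim: n Q k => [|n IHn] Q k le_Qn Q0.
  by move: le_Qn; rewrite leqn0 size_poly_eq0 (negbTE Q0).
have [A0 a_gt0 deg_ek] := ldeg_cf_rem k; have a_le := A_le k.+1 isT.
set a := (size (A k.+1)).-1 in a_gt0 deg_ek a_le.
set z := lspoly Q * e k; pose P : {poly F} := ipart z; set eps := lsfrac z.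
have deg_z : ldeg z = ((size Q).-1)%:Z - a%:Z.
  by rewrite ldegM ?lspoly_eq0 // ldeg_poly // deg_ek.
have [P0|P0] := eqVneq P 0.
  have eps_z : eps = z by rewrite -(ipart_add_frac z) -/P P0 raddf0 add0r.
  by rewrite eps_z deg_z mulf_neq0 ?lspoly_eq0 //; split=> //; lia.
have [|fracP0 le_P] := IHn P k.+1 _ P0.
  by have := size_ipart_polyM_frac (e k) Q0; rewrite e_frac -/z -/P; move: le_Qn; lia.
set w := lspoly (A k.+1) + e k.+1.
have Pe : lspoly P * e k.+1 = lspoly Q - lspoly P * lspoly (A k.+1) - eps * w.
  have zw : z * w = lspoly Q by rewrite /z -mulrA e_rec mulr1.
  by rewrite -zw -(ipart_add_frac z) -/P -/eps /w; ring.
have frac_Pe : lsfrac (lspoly P * e k.+1) = - lsfrac (eps * w).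
  by rewrite Pe -rmorphM !raddfB /= !lsfrac_poly subrr sub0r.
have eps0 : eps != 0.
  by apply: contraNneq fracP0 => eps0; rewrite frac_Pe eps0 mul0r raddf0 oppr0.
have deg_epsw : ldeg (eps * w) = ldeg eps + a.
  rewrite ldegM ?e_quot_neq0 // ldegDl ?ldeg_poly ?lspoly_eq0 // => _.
  by have := ldeg_e_lt0 k.+1; lia.
have deg_P : ldeg z = ((size P).-1)%:Z := ldeg_ipart P0.
split=> //; have [lt0|ge0] := ltP (ldeg eps + a%:Z) 0; last by lia.
by move: le_P; rewrite frac_Pe ldegN lsfrac_ldeg_lt0 deg_epsw //; lia.
Qed.

Lemma cf_convergent j k : exists2 Q, Q != 0 &
  lsfrac (lspoly Q * e k) != 0 /\
  ((size Q).-1)%:Z + ldeg (lsfrac (lspoly Q * e k)) = - ((size (A (k + j).+1)).-1)%:Z.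
Proof.
elim: j k => [|j IHj] k.
  have [_ _ deg_ek] := ldeg_cf_rem k.
  by exists 1; rewrite ?oner_neq0 // rmorph1 mul1r e_frac size_poly1 addn0 add0r.
have [Q' Q'0 [eps0 deg_Q']] := IHj k.+1; have [A0 a_gt0 deg_ek] := ldeg_cf_rem k.
set z := lspoly Q' * e k.+1 in eps0 deg_Q'; set eps := lsfrac z in eps0 deg_Q'.
pose P : {poly F} := ipart z.
have Qe : lspoly (Q' * A k.+1 + P) * e k = lspoly Q' - eps * e k.
  have P_eq : lspoly P = z - eps by rewrite -{1}(ipart_add_frac z) addrK.
  rewrite rmorphD rmorphM /= P_eq /z.
  transitivity (lspoly Q' * (e k * (lspoly (A k.+1) + e k.+1)) - eps * e k); first by ring.
  by rewrite e_rec mulr1.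
have deg_epse : ldeg (eps * e k) = ldeg eps - ((size (A k.+1)).-1)%:Z.
  by rewrite ldegM // deg_ek.
have frac_Qe : lsfrac (lspoly (Q' * A k.+1 + P) * e k) = - (eps * e k).
  rewrite Qe raddfB /= lsfrac_poly sub0r lsfrac_ldeg_lt0 // deg_epse.
  by have := ldeg_lsfrac_lt0 eps0; lia.
have size_QA : size (Q' * A k.+1) = (size Q' + size (A k.+1)).-1 := size_mul Q'0 A0.
have size_P : (size P < size (Q' * A k.+1)%R)%N.
  have := size_ipart_polyM_frac (e k.+1) Q'0; rewrite e_frac -/z -/P size_QA.
  (* [size_mul] lives over [idomainType]: [set] merges the two elaborations of each size. *)
  by set q := size Q'; set sa := size (A k.+1); lia.
exists (Q' * A k.+1 + P).
  by rewrite -size_poly_gt0 size_polyDl //; apply: leq_ltn_trans size_P.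
rewrite frac_Qe oppr_eq0 mulf_neq0 //; split=> //.
rewrite ldegN deg_epse size_polyDl // size_QA -addSnnS -deg_Q'.
have : (0 < size Q')%N by rewrite size_poly_gt0.
by set q := size Q'; set sa := size (A k.+1); lia.
Qed.

End Expansion.

Definition lsrational a := exists P Q, Q != 0 /\ lspoly Q * a = lspoly P.

Lemma lsrational0 : lsrational 0.
Proof. by exists 0, 1; rewrite oner_neq0 mulr0 raddf0. Qed.

Lemma lsrational_cf_step a b P : a * (lspoly P + b) = 1 -> lsrational b -> lsrational a.
Proof.
move=> ab1 [N [D [D0 Db]]].
have DPa : lspoly (P * D + N) * a = lspoly D.
  rewrite rmorphD rmorphM /= -Db.
  by transitivity (lspoly D * (a * (lspoly P + b))); [ring | rewrite ab1 mulr1].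
exists D, (P * D + N); split=> //; apply: contraNneq D0 => PDN0.
by rewrite -lspoly_eq0 -DPa PDN0 raddf0 mul0r.
Qed.

Fixpoint cf_rem eta j : lseries F := if j is j'.+1 then lsfrac (cf_rem eta j')^-1 else eta.

Definition cf_quot eta j : {poly F} := if j is j'.+1 then ipart (cf_rem eta j')^-1 else 0.

Lemma cf_rem_rec eta j :
  cf_rem eta j != 0 -> cf_rem eta j * (lspoly (cf_quot eta j.+1) + cf_rem eta j.+1) = 1.
Proof. by move=> r0; rewrite /= ipart_add_frac mulfV. Qed.

Lemma cf_rem_neq0 eta : ~ lsrational eta -> forall j, cf_rem eta j != 0.
Proof.
move=> eta_irr; suff back j : lsrational (cf_rem eta j) -> lsrational eta.
  by move=> j; apply/eqP => r0; apply/eta_irr/(back j); rewrite r0; exact: lsrational0.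
elim: j => [//|j IHj] rat_j1; apply: IHj.
have [->|rj0] := eqVneq (cf_rem eta j) 0; first exact: lsrational0.
exact: lsrational_cf_step (cf_rem_rec rj0) rat_j1.
Qed.

Lemma cf_rem_expansion eta :
  ~ lsrational eta -> lcf_expansion eta (cf_rem eta) (cf_quot eta).
Proof.
move=> eta_irr; split=> // j; have rj0 := cf_rem_neq0 eta_irr j.
by split; [| exact: lsfrac_id | exact: cf_rem_rec].
Qed.

Lemma cf_expansionP (eta : laurent F) A :
  cf_expansion eta A <-> exists e, lcf_expansion (lclass eta) e A.
Proof.
split=> [[es [es0 es_rec]] | [e [e0 e_rec]]].
  exists (fun j => lclass (es j)); split=> [|j]; first exact/lclassP.
  have [es_neq0 [es_frac es_one]] := es_rec j; split.
  - by apply/eqP => /lclass_eq0.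
  - by rewrite -lclass_lfrac; apply/lclassP.
  - by rewrite -lclassD -lclassM; apply/lclassP.
exists (fun j => lrepr (e j)); split=> [|j] /=; first by apply/lclassP; rewrite lreprK.
have [ej0 e_frac e_one] := e_rec j; split; [|split].
- by move=> /lclass_eq0; rewrite lreprK; apply/eqP.
- by apply/lclassP; rewrite lclass_lfrac !lreprK.
- by apply/lclassP; rewrite lclassM lclassD !lreprK.
Qed.

End ContinuedFraction.

(** * Littlewood products and deficiency *)

Section Littlewood.
Variables (K : realType) (F : fieldType).
Implicit Types (t : laurent F) (P Q : {poly F}).

Lemma lsfrac_shift t r Q :
  lclass (lfrac (lmul (lpoly ('X^r * Q)) t)) =
  lsfrac (lspoly Q * lsfrac (lspoly 'X^r * lclass t)).
Proof.
by rewrite lclass_lfrac lclassM -/(lspoly _) lsfrac_polyM_frac rmorphM /= -mulrA mulrCA.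
Qed.

Lemma littlewood_value t r Q : Q != 0 ->
  let eps := lsfrac (lspoly Q * lsfrac (lspoly 'X^r * lclass t)) in eps != 0 ->
  labs K (lpoly Q) * lnorm K (lmul (lpoly ('X^r * Q)) t) = 2%:R ^ ((size Q).-1%:Z + ldeg eps).
Proof.
move=> Q0 eps eps0; rewrite /lnorm !labs_lclass ?lsfrac_shift ?lspoly_eq0 //.
by rewrite ldeg_poly // expfzDr ?pnatr_eq0.
Qed.

Lemma lsrational_shift t r :
  is_irrational_ser t -> ~ lsrational (lsfrac (lspoly 'X^r * lclass t)).
Proof.
move=> t_irr [P [Q [Q0 QP]]]; apply: t_irr.
exists (P + Q * ipart (lspoly 'X^r * lclass t)), (Q * 'X^r); split.
  by rewrite mulf_neq0 // monic_neq0 // monicXn.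
apply/lclassP; rewrite lclassM -!/(lspoly _) rmorphD !rmorphM /= -QP -mulrDr.
by rewrite addrC ipart_add_frac mulrA.
Qed.

Lemma lt_archi_bound (c : K) (a : nat) :
  0 < c -> c <= 2%:R ^ (- a%:Z) -> (a < Num.Def.archi_bound c^-1)%N.
Proof.
move=> c0 le_c; rewrite ltnNge; apply/negP => /upper_nthrootP.
rewrite invf_plt ?posrE ?exprn_gt0 ?ltr0n // exprnN.
by move=> /(le_lt_trans le_c); rewrite ltxx.
Qed.

Lemma deficiency_of_lower_bound t (c : K) : 0 < c ->
  (forall r Q, Q != 0 -> c <= labs K (lpoly Q) * lnorm K (lmul (lpoly ('X^r * Q)) t)) ->
  deficiency_le t (Num.Def.archi_bound c^-1).
Proof.
move=> c0 c_le r A /cf_expansionP [e e_cf] j j_gt0.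
rewrite lclass_lfrac lclassM in e_cf.
have [Q Q0 [eps0 deg_eps]] := cf_convergent (lsfrac_id _) e_cf j.-1 0.
rewrite e_cf.1 in eps0 deg_eps.
have := c_le r Q Q0; rewrite littlewood_value // deg_eps add0n prednK //.
by move/(lt_archi_bound c0)/ltnW/leqW.
Qed.

Lemma lower_bound_of_deficiency t D : is_irrational_ser t -> deficiency_le t D ->
  forall r Q, Q != 0 ->
  (2%:R : K) ^ (- (D.+1)%:Z) <= labs K (lpoly Q) * lnorm K (lmul (lpoly ('X^r * Q)) t).
Proof.
move=> t_irr t_def r Q Q0; set eta := lsfrac (lspoly 'X^r * lclass t).
have eta_irr := lsrational_shift (r := r) t_irr.
have e_cf := cf_rem_expansion eta_irr.
have A_le : forall j, (0 < j)%N -> ((size (cf_quot eta j)).-1 <= D.+1)%N.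
  apply: (t_def r); apply/cf_expansionP; exists (cf_rem eta).
  by rewrite lclass_lfrac lclassM.
have [eps0 le_eps] := cf_frac_lower_bound (lsfrac_id _) e_cf A_le 0 Q0.
by rewrite littlewood_value // ler_eXz2l ?ltr1n.
Qed.

End Littlewood.

Theorem lemma3 (R : realType) (p : nat) (theta : laurent 'F_p) :
  prime p -> is_irrational_ser theta ->
  ((exists c : R, 0 < c /\
      forall (r : nat) (Q : {poly 'F_p}), Q != 0 ->
        c <= labs R (lpoly Q) * lnorm R (lmul (lpoly ('X^r * Q)) theta))
   <-> exists D : nat, deficiency_le theta D)
  /\
  (forall D : nat, deficiency_le theta D ->
     forall (r : nat) (Q : {poly 'F_p}), Q != 0 ->
       (2%:R : R) ^ (- (D.+1)%:Z) <= labs R (lpoly Q) * lnorm R (lmul (lpoly ('X^r * Q)) theta)).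
Proof.
(* ['F_p] is a field for every [p]. *)
move=> _ theta_irr; split=> [|D /lower_bound_of_deficiency]; last exact.
split=> [[c [c0 c_le]] | [D theta_def]].
  by exists (Num.Def.archi_bound c^-1); exact: deficiency_of_lower_bound c_le.
exists (2%:R ^ (- (D.+1)%:Z)); split; first by rewrite exprz_gt0 ?ltr0n.
exact: lower_bound_of_deficiency.
Qed.
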